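(* Let $p$ be a well-typed Molholes program. Then for every input stream $is=(i_0,i_1,\dots)$ of lists compatible with $\mathsf{inputs}\,p$ (i.e. each $i_j$ is a list whose $n$-th entry is a value of the $n$-th type of $\mathsf{inputs}\,p$), the stream $\mathrm{run}\,p\,(\mathrm{init}\,p)\,is$ is everywhere defined and is a stream $os$ of lists compatible with $\mathsf{outputs}\,p$.
   Context: Host language: types are sets, functions total; products; $\mathsf{Unit}=\{tt\}$. A resource of type $A$ is $\mathsf{Ref}\,A\,n$, $\mathrm{id}=n$. Molholes terms: $\mathsf{Arr}\,f:\mathsf{RSF}\,A\,B$, $\mathsf{Comp}\,t_1\,t_2:\mathsf{RSF}\,A\,C$ ($t_1:\mathsf{RSF}\,A\,B$, $t_2:\mathsf{RSF}\,B\,C$), $\mathsf{First}\,t:\mathsf{RSF}(A\times C)(B\times C)$, $\mathsf{Get}\,r:\mathsf{RSF}\,A(A\times B)$, $\mathsf{Set}\,r:\mathsf{RSF}(A\times B)A$ ($r$ of type $B$). A status is $\mathsf{Internal}$, $\mathsf{Input}\,b$ or $\mathsf{Output}\,b$; a cell is $\mathsf{Cell}(s,\tau)\,x$ with $x$ a value of $\tau$ or $\mathsf{undef}$; a memory is a partial map $\mathbb N\rightharpoonup$ cells. For $r=\mathsf{Ref}\,A\,n$: $\mathrm{read}\,r\,\sigma=(x,\sigma)$ if $\sigma n=\mathsf{Cell}(\mathsf{Internal},A)x$; $=(x,\sigma[n\mapsto\mathsf{Cell}(\mathsf{Input}\,\mathrm{false},A)\mathsf{undef}])$ if $\sigma n=\mathsf{Cell}(\mathsf{Input}\,\mathrm{true},A)x$;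 else undefined. $\mathrm{write}\,r\,\sigma\,v=\sigma[n\mapsto\mathsf{Cell}(\mathsf{Internal},A)v]$ if $\sigma n=\mathsf{Cell}(\mathsf{Internal},A)x$; $=\sigma[n\mapsto\mathsf{Cell}(\mathsf{Output}\,\mathrm{false},A)v]$ if $\sigma n=\mathsf{Cell}(\mathsf{Output}\,\mathrm{true},A)\mathsf{undef}$; else undefined. Semantics $\mathrm{step}\,t:A\to(\text{memory}\rightharpoonup B\times\text{memory})$: $\mathsf{Arr}\,f\mapsto\lambda x\sigma.(fx,\sigma)$; $\mathsf{Comp}\,t_1t_2\mapsto\lambda x\sigma.\mathrm{step}\,t_2\,y\,\sigma'$ with $(y,\sigma')=\mathrm{step}\,t_1\,x\,\sigma$; $\mathsf{First}\,t\mapsto\lambda(x,c)\sigma.((y,c),\sigma')$ with $(y,\sigma')=\mathrm{step}\,t\,x\,\sigma$; $\mathsf{Get}\,r\mapsto\lambda x\sigma.((x,y),\sigma')$ with $(y,\sigma')=\mathrm{read}\,r\,\sigma$; $\mathsf{Set}\,r\mapsto\lambda(x,y)\sigma.(x,\mathrm{write}\,r\,\sigma\,y)$ (all partial). A program $p$ consists of a list $\mathsf{inputs}\,p$ of $k_{in}$ types, a list $\mathsf{internals}\,p$ of $k$ typed values, a list $\mathsf{outputs}\,p$ of $k_{out}$ types, and $\mathsf{program}\,p:\mathsf{RSF}\,\mathsf{Unit}\,\mathsf{Unit}$; input resources have identifiers $0,\dots,k_{in}-1$, internal ones $k_{in},\dots,k_{in}+k-1$, output ones $k_{in}+k,\dots,k_{in}+k+k_{out}-1$,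 with the corresponding types. $\mathrm{init}\,p$ maps internal index $n$ to $\mathsf{Cell}(\mathsf{Internal},\tau)\,v$ where $v:\tau$ is the corresponding entry of $\mathsf{internals}\,p$, undefined elsewhere. $\mathrm{pull}\,p\,\sigma\,i$ maps input index $n$ to $\mathsf{Cell}(\mathsf{Input}\,\mathrm{true},\tau_n)\,i_n$, output index $n$ to $\mathsf{Cell}(\mathsf{Output}\,\mathrm{true},\tau)\,\mathsf{undef}$, and agrees with $\sigma$ elsewhere. $\mathrm{push}\,p\,\sigma$ is the list, in index order, of values $v$ with $\sigma\,n=\mathsf{Cell}(\mathsf{Output}\,\mathrm{false},\tau)\,v$ for output indices $n$. Corecursively, $\mathrm{run}\,p\,\sigma\,(i:is)=(\mathrm{push}\,p\,\sigma'):\mathrm{run}\,p\,\sigma'\,is$ where $(tt,\sigma')=\mathrm{step}(\mathsf{program}\,p)\,tt\,(\mathrm{pull}\,p\,\sigma\,i)$ (undefined if this step is undefined). Well-typedness: an abstract memory $\Sigma$ maps indices to pairs (status, type). For $r=\mathsf{Ref}\,A\,n$: $\mathrm{read}^\dagger r\Sigma=\Sigma$ if $\Sigma n=(\mathsf{Internal},A)$, $=\Sigma[n\mapsto(\mathsf{Input}\,\mathrm{false},A)]$ if $\Sigma n=(\mathsf{Input}\,\mathrm{true},A)$, else undefined; $\mathrm{write}^\dagger r\Sigma=\Sigma$ if $\Sigma n=(\mathsf{Internal},A)$, $=\Sigma[n\mapsto(\mathsf{Output}\,\mathrm{false},A)]$ if $\Sigma n=(\mathsf{Output}\,\mathrm{true},A)$,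 else undefined. $\mathrm{step}^\dagger(\mathsf{Arr}\,f)\Sigma=\Sigma$; $\mathrm{step}^\dagger(\mathsf{First}\,t)=\mathrm{step}^\dagger t$; $\mathrm{step}^\dagger(\mathsf{Comp}\,t_1t_2)\Sigma=\mathrm{step}^\dagger t_2(\mathrm{step}^\dagger t_1\Sigma)$; $\mathrm{step}^\dagger(\mathsf{Get}\,r)=\mathrm{read}^\dagger r$; $\mathrm{step}^\dagger(\mathsf{Set}\,r)=\mathrm{write}^\dagger r$ (partial). $\mathrm{init}^\dagger p$ assigns $(\mathsf{Input}\,\mathrm{true},\tau)$ to input indices, $(\mathsf{Output}\,\mathrm{true},\tau)$ to output indices and $(\mathsf{Internal},\tau)$ to internal indices (with the corresponding types), undefined elsewhere. $p$ is well-typed if $\mathrm{step}^\dagger(\mathsf{program}\,p)(\mathrm{init}^\dagger p)$ is defined and assigns status $\mathsf{Input}\,\mathrm{false}$ to every input index and $\mathsf{Output}\,\mathrm{false}$ to every output index. *)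

From Stdlib Require Import Bool List Arith Streams.
Import ListNotations.

Record Ref (A : Type) := mkRef { rid : nat }.
Arguments mkRef {A} _.
Arguments rid {A} _.

(** Molholes terms. [SetR] is the paper's [Set] (Set is a Rocq keyword). *)
Inductive RSF : Type -> Type -> Type :=
| Arr   {A B : Type} : (A -> B) -> RSF A B
| Comp  {A B C : Type} : RSF A B -> RSF B C -> RSF A C
| First {A B C : Type} : RSF A B -> RSF (A * C) (B * C)
| Get   {A B : Type} : Ref B -> RSF A (A * B)
| SetR  {A B : Type} : Ref B -> RSF (A * B) A.

Inductive status := Internal | Input (b : bool) | Output (b : bool).

(** A cell: status, type tau, and a value of tau or undef (None). *)
Record cell := Cell { cstatus : status; ctype : Type; cval : option ctype }.

Definition memory := nat -> option cell.

Definition upd {X : Type} (m : nat -> option X) (n : nat) (c : X) : nat -> option X :=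
  fun k => if Nat.eqb k n then Some c else m k.

Inductive read {A : Type} (r : Ref A) (s : memory) : A -> memory -> Prop :=
| read_internal (x : A) :
    s (rid r) = Some (Cell Internal A (Some x)) -> read r s x s
| read_input (x : A) :
    s (rid r) = Some (Cell (Input true) A (Some x)) ->
    read r s x (upd s (rid r) (Cell (Input false) A None)).

Inductive write {A : Type} (r : Ref A) (s : memory) (v : A) : memory -> Prop :=
| write_internal (x : option A) :
    s (rid r) = Some (Cell Internal A x) ->
    write r s v (upd s (rid r) (Cell Internal A (Some v)))
| write_output :
    s (rid r) = Some (Cell (Output true) A None) ->
    write r s v (upd s (rid r) (Cell (Output false) A (Some v))).

(** step t x sigma = (y, sigma')  (graph of the partial function) *)
Inductive step : forall {A B : Type}, RSF A B -> A -> memory -> B -> memory -> Prop :=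
| step_arr {A B} (f : A -> B) x s : step (Arr f) x s (f x) s
| step_comp {A B C} (t1 : RSF A B) (t2 : RSF B C) x s y s' z s'' :
    step t1 x s y s' -> step t2 y s' z s'' -> step (Comp t1 t2) x s z s''
| step_first {A B C} (t : RSF A B) x (c : C) s y s' :
    step t x s y s' -> step (First (C:=C) t) (x, c) s (y, c) s'
| step_get {A B} (r : Ref B) (x : A) s y s' :
    read r s y s' -> step (Get (A:=A) r) x s (x, y) s'
| step_set {A B} (r : Ref B) (x : A) (y : B) s s' :
    write r s y s' -> step (SetR (A:=A) r) (x, y) s x s'.

Record program := Program {
  inputs    : list Type;
  internals : list {tau : Type & tau};
  outputs   : list Type;
  prog      : RSF unit unit }.

Definition k_in p := length (inputs p).
Definition k_int p := length (internals p).
Definition k_out p := length (outputs p).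

Definition is_input_idx p n := n < k_in p.
Definition is_internal_idx p n := k_in p <= n < k_in p + k_int p.
Definition is_output_idx p n := k_in p + k_int p <= n < k_in p + k_int p + k_out p.

Definition compat (ts : list Type) (l : list {tau : Type & tau}) : Prop :=
  List.map (@projT1 Type (fun tau => tau)) l = ts.

Definition init (p : program) : memory :=
  fun n =>
    if (k_in p <=? n) && (n <? k_in p + k_int p) then
      match nth_error (internals p) (n - k_in p) with
      | Some (existT _ tau v) => Some (Cell Internal tau (Some v))
      | None => None
      end
    else None.

Definition pull (p : program) (s : memory) (i : list {tau : Type & tau}) : memory :=
  fun n =>
    if n <? k_in p then
      match nth_error i n with
      | Some (existT _ tau v) => Some (Cell (Input true) tau (Some v))
      | None => s n
      end
    else if (k_in p + k_int p <=? n) && (n <? k_in p + k_int p + k_out p) then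
      match nth_error (outputs p) (n - (k_in p + k_int p)) with
      | Some tau => Some (Cell (Output true) tau None)
      | None => s n
      end
    else s n.

Definition push (p : program) (s : memory) : list {tau : Type & tau} :=
  flat_map (fun n =>
    match s n with
    | Some (Cell (Output false) tau (Some v)) => [existT (fun t => t) tau v]
    | _ => []
    end) (seq (k_in p + k_int p) (k_out p)).

(** [run_rel p s is os]: run p s is is (everywhere) defined and equals os. *)
CoInductive run_rel (p : program) (s : memory) :
  Stream (list {tau : Type & tau}) -> Stream (list {tau : Type & tau}) -> Prop :=
| run_cons i is s' os :
    step (prog p) tt (pull p s i) tt s' ->
    run_rel p s' is os ->
    run_rel p s (Cons i is) (Cons (push p s') os).

Definition amemory := nat -> option (status * Type).

Inductive readT {A : Type} (r : Ref A) (S : amemory) : amemory -> Prop :=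
| readT_internal : S (rid r) = Some (Internal, A) -> readT r S S
| readT_input : S (rid r) = Some (Input true, A) ->
    readT r S (upd S (rid r) (Input false, A)).

Inductive writeT {A : Type} (r : Ref A) (S : amemory) : amemory -> Prop :=
| writeT_internal : S (rid r) = Some (Internal, A) -> writeT r S S
| writeT_output : S (rid r) = Some (Output true, A) ->
    writeT r S (upd S (rid r) (Output false, A)).

Inductive stepT : forall {A B : Type}, RSF A B -> amemory -> amemory -> Prop :=
| stepT_arr {A B} (f : A -> B) S : stepT (Arr f) S S
| stepT_comp {A B C} (t1 : RSF A B) (t2 : RSF B C) S S' S'' :
    stepT t1 S S' -> stepT t2 S' S'' -> stepT (Comp t1 t2) S S''
| stepT_first {A B C} (t : RSF A B) S S' :
    stepT t S S' -> stepT (First (C:=C) t) S S'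
| stepT_get {A B} (r : Ref B) S S' : readT r S S' -> stepT (Get (A:=A) r) S S'
| stepT_set {A B} (r : Ref B) S S' : writeT r S S' -> stepT (SetR (A:=A) r) S S'.

Definition initT (p : program) : amemory :=
  fun n =>
    if n <? k_in p then
      match nth_error (inputs p) n with Some tau => Some (Input true, tau) | None => None end
    else if n <? k_in p + k_int p then
      match nth_error (internals p) (n - k_in p) with
      | Some (existT _ tau _) => Some (Internal, tau) | None => None end
    else if n <? k_in p + k_int p + k_out p then
      match nth_error (outputs p) (n - (k_in p + k_int p)) with
      | Some tau => Some (Output true, tau) | None => None end
    else None.

Definition well_typed (p : program) : Prop :=
  exists S, stepT (prog p) (initT p) S /\
    (forall n, is_input_idx p n -> exists tau, S n = Some (Input false, tau)) /\
    (forall n, is_output_idx p n -> exists tau, S n = Some (Output false, tau)).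

From Stdlib Require Import List Streams.
From Stdlib Require Import Arith Lia ClassicalEpsilon.
Import ListNotations.

(* Type soundness in the style of progress-and-preservation.  A concrete memory is typed by
   an abstract one when they agree on statuses and types and every cell holds a value exactly
   when its status says it should (internal cells, pending inputs, produced outputs).  One
   typed step of a term always exists and ends in memory typed by the abstract result.  Each
   cycle of a well-typed program starts from [pull], which is typed by [initT], and the
   abstract step never touches internal or absent cells, so the invariant "typed by [initT]
   away from the I/O indices" survives the cycle, while every output index has been written
   with a value of the declared type.  The output stream is then built corecursively. *)

Definition value_ok (st : status) {T : Type} (v : option T) : Prop :=
  match st with
  | Internal | Input true | Output false => exists x, v = Some x
  | Input false | Output true => v = None
  end.

Definition typed_cell (o : option cell) (a : option (status * Type)) : Prop :=
  match o, a with
  | None, None => True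
  | Some c, Some (st, T) => exists v : option T, c = Cell st T v /\ value_ok st v
  | _, _ => False
  end.

Definition typed_memory (s : memory) (S : amemory) : Prop :=
  forall n, typed_cell (s n) (S n).

Lemma typed_cell_Some o st T :
  typed_cell o (Some (st, T)) ->
  exists v : option T, o = Some (Cell st T v) /\ value_ok st v.
Proof.
  destruct o as [c|]; simpl; [|tauto].
  intros [v [-> Hv]]; eauto.
Qed.

Lemma upd_eq {X : Type} (m : nat -> option X) n c : upd m n c n = Some c.
Proof. unfold upd; now rewrite Nat.eqb_refl. Qed.

Lemma upd_neq {X : Type} (m : nat -> option X) n c k : k <> n -> upd m n c k = m k.
Proof. intro Hk; unfold upd; now rewrite (proj2 (Nat.eqb_neq k n) Hk). Qed.

Lemma typed_memory_upd s S S' n c :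
  typed_memory s S -> typed_cell (Some c) (S' n) ->
  (forall k, k <> n -> S' k = S k) ->
  typed_memory (upd s n c) S'.
Proof.
  intros Hs Hc Hframe k; destruct (Nat.eq_dec k n) as [->|Hk].
  - now rewrite upd_eq.
  - rewrite upd_neq, Hframe by exact Hk; apply Hs.
Qed.

Lemma read_safe {A : Type} (r : Ref A) S S' s :
  readT r S S' -> typed_memory s S ->
  exists y s', read r s y s' /\ typed_memory s' S'.
Proof.
  intros [HS | HS] Hs; specialize (Hs (rid r)) as Hr; rewrite HS in Hr;
    destruct (typed_cell_Some _ _ _ Hr) as [v [Hsr [x ->]]].
  - exists x, s; split; [now apply read_internal | exact Hs].
  - exists x; eexists; split; [now apply read_input|].
    apply typed_memory_upd with S; [exact Hs | | apply upd_neq].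
    rewrite upd_eq; simpl; eauto.
Qed.

Lemma write_safe {A : Type} (r : Ref A) S S' s (y : A) :
  writeT r S S' -> typed_memory s S ->
  exists s', write r s y s' /\ typed_memory s' S'.
Proof.
  intros [HS | HS] Hs; specialize (Hs (rid r)) as Hr; rewrite HS in Hr;
    destruct (typed_cell_Some _ _ _ Hr) as [v [Hsr Hv]]; simpl in Hv.
  - eexists; split; [now apply write_internal with v|].
    apply typed_memory_upd with S; [exact Hs | | reflexivity].
    rewrite HS; simpl; eauto.
  - subst v; eexists; split; [now apply write_output|].
    apply typed_memory_upd with S; [exact Hs | | apply upd_neq].
    rewrite upd_eq; simpl; eauto.
Qed.

Lemma step_safe {A B : Type} (t : RSF A B) S S' :
  stepT t S S' -> forall s x, typed_memory s S ->
  exists y s', step t x s y s' /\ typed_memory s' S'.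
Proof.
  induction 1 as [A B f S | A B C t1 t2 S S1 S' _ IH1 _ IH2 | A B C t S S' _ IH
                  | A B r S S' HT | A B r S S' HT]; intros s x Hs.
  - exists (f x), s; split; [constructor | exact Hs].
  - destruct (IH1 s x Hs) as [y [s1 [H1 Hs1]]].
    destruct (IH2 s1 y Hs1) as [z [s2 [H2 Hs2]]].
    exists z, s2; split; [econstructor; eauto | exact Hs2].
  - destruct x as [x c].
    destruct (IH s x Hs) as [y [s' [H Hs']]].
    exists (y, c), s'; split; [now constructor | exact Hs'].
  - destruct (read_safe r S S' s HT Hs) as [y [s' [H Hs']]].
    exists (x, y), s'; split; [now constructor | exact Hs'].
  - destruct x as [x y].
    destruct (write_safe r S S' s y HT Hs) as [s' [H Hs']].
    exists x, s'; split; [now constructor | exact Hs'].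
Qed.

Definition fixed_cell (a : option (status * Type)) : Prop :=
  a = None \/ exists T, a = Some (Internal, T).

Lemma stepT_fixed {A B : Type} (t : RSF A B) S S' :
  stepT t S S' -> forall n, fixed_cell (S n) -> S' n = S n.
Proof.
  assert (Hupd : forall S n a st T, S n = Some (st, T) -> st <> Internal ->
            fixed_cell (S n) -> upd S n a n = S n).
  { intros S0 n a st T HS Hst [Hn | [T' Hn]]; rewrite Hn in HS; congruence. }
  induction 1 as [| A B C t1 t2 S S1 S' _ IH1 _ IH2 | | A B r S S' HT | A B r S S' HT];
    intros n Hn; auto.
  - assert (HS1 : S1 n = S n) by (apply IH1; exact Hn).
    rewrite IH2; [exact HS1 | now rewrite HS1].
  - destruct HT as [|HS]; [reflexivity|].
    destruct (Nat.eq_dec n (rid r)) as [->|Hk];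
      [eapply Hupd; eauto; discriminate | now apply upd_neq].
  - destruct HT as [|HS]; [reflexivity|].
    destruct (Nat.eq_dec n (rid r)) as [->|Hk];
      [eapply Hupd; eauto; discriminate | now apply upd_neq].
Qed.

Definition cell_type (a : option (status * Type)) : option Type :=
  option_map (@snd status Type) a.

Lemma stepT_types {A B : Type} (t : RSF A B) S S' :
  stepT t S S' -> forall n, cell_type (S' n) = cell_type (S n).
Proof.
  assert (Hupd : forall S n st st' T k, S n = Some (st, T) ->
            cell_type (upd S n (st', T) k) = cell_type (S k)).
  { intros S0 n st st' T k HS; destruct (Nat.eq_dec k n) as [->|Hk].
    - now unfold cell_type; rewrite upd_eq, HS.
    - now unfold cell_type; rewrite upd_neq. }
  induction 1 as [| A B C t1 t2 S S1 S' _ IH1 _ IH2 | | A B r S S' HT | A B r S S' HT];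
    intro n; auto.
  - now rewrite IH2, IH1.
  - destruct HT as [|HS]; [reflexivity | eapply Hupd; eauto].
  - destruct HT as [|HS]; [reflexivity | eapply Hupd; eauto].
Qed.

Lemma nth_error_lt {X : Type} (l : list X) n :
  n < length l -> exists x, nth_error l n = Some x.
Proof.
  intro H; destruct (nth_error l n) eqn:E; eauto.
  apply nth_error_None in E; lia.
Qed.

Lemma initT_input p n T :
  nth_error (inputs p) n = Some T -> initT p n = Some (Input true, T).
Proof.
  intro E; assert (Hn : n < k_in p) by (apply nth_error_Some; congruence).
  unfold initT; rewrite (proj2 (Nat.ltb_lt _ _) Hn), E; reflexivity.
Qed.

Lemma initT_output p j T :
  nth_error (outputs p) j = Some T ->
  initT p (k_in p + k_int p + j) = Some (Output true, T).
Proof.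
  intro E; assert (Hj : j < k_out p) by (apply nth_error_Some; congruence).
  unfold initT.
  destruct (Nat.ltb_spec (k_in p + k_int p + j) (k_in p)); [lia|].
  destruct (Nat.ltb_spec (k_in p + k_int p + j) (k_in p + k_int p)); [lia|].
  destruct (Nat.ltb_spec (k_in p + k_int p + j) (k_in p + k_int p + k_out p)); [|lia].
  now rewrite Nat.add_comm, Nat.add_sub, E.
Qed.

Lemma initT_fixed p n :
  ~ is_input_idx p n -> ~ is_output_idx p n -> fixed_cell (initT p n).
Proof.
  unfold is_input_idx, is_output_idx, initT; intros Hin Hout.
  destruct (Nat.ltb_spec n (k_in p)); [lia|].
  destruct (Nat.ltb_spec n (k_in p + k_int p)).
  - destruct (nth_error (internals p) (n - k_in p)) as [[T v]|]; unfold fixed_cell; eauto.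
  - destruct (Nat.ltb_spec n (k_in p + k_int p + k_out p)); [lia | now left].
Qed.

Definition typed_outside_io (p : program) (s : memory) : Prop :=
  forall n, ~ is_input_idx p n -> ~ is_output_idx p n -> typed_cell (s n) (initT p n).

Lemma init_typed_outside_io p : typed_outside_io p (init p).
Proof.
  intros n Hin Hout; unfold init.
  destruct (Nat.leb_spec (k_in p) n); [|unfold is_input_idx in Hin; lia].
  destruct (Nat.ltb_spec n (k_in p + k_int p)); simpl.
  - unfold initT.
    destruct (Nat.ltb_spec n (k_in p)); [lia|].
    destruct (Nat.ltb_spec n (k_in p + k_int p)); [|lia].
    destruct (nth_error (internals p) (n - k_in p)) as [[T v]|]; simpl; eauto.
  - destruct (initT_fixed p n Hin Hout) as [-> | [T HT]]; [exact I|].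
    unfold initT in HT.
    destruct (Nat.ltb_spec n (k_in p)); [lia|].
    destruct (Nat.ltb_spec n (k_in p + k_int p)); [lia|].
    destruct (Nat.ltb_spec n (k_in p + k_int p + k_out p));
      [destruct nth_error in HT|]; discriminate.
Qed.

Lemma pull_typed p s i :
  typed_outside_io p s -> compat (inputs p) i -> typed_memory (pull p s i) (initT p).
Proof.
  intros Hs Hi n; unfold compat in Hi; unfold pull.
  destruct (Nat.ltb_spec n (k_in p)) as [Hn|Hn].
  - destruct (nth_error_lt i n) as [[T v] E];
      [rewrite <- (length_map (@projT1 Type (fun tau => tau))), Hi; exact Hn|].
    assert (Ein : nth_error (inputs p) n = Some T) by now rewrite <- Hi, nth_error_map, E.
    rewrite E, (initT_input p n T Ein); simpl; eauto.
  - destruct (Nat.leb_spec (k_in p + k_int p) n);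
      destruct (Nat.ltb_spec n (k_in p + k_int p + k_out p)); simpl;
      try (apply Hs; unfold is_input_idx, is_output_idx; lia).
    destruct (nth_error_lt (outputs p) (n - (k_in p + k_int p))) as [T E];
      [unfold k_out in *; lia|].
    rewrite E; replace (initT p n) with (Some (Output true, T)); [simpl; eauto|].
    rewrite <- (initT_output p _ T E); f_equal; lia.
Qed.

Definition produced_value (s : memory) (n : nat) : list {tau : Type & tau} :=
  match s n with
  | Some (Cell (Output false) tau (Some v)) => [existT (fun t => t) tau v]
  | _ => []
  end.

Lemma produced_values_compat s (ts : list Type) a :
  (forall j T, nth_error ts j = Some T ->
     exists v, s (a + j) = Some (Cell (Output false) T (Some v))) ->
  compat ts (flat_map (produced_value s) (seq a (length ts))).
Proof.
  unfold compat; revert a; induction ts as [|T ts IH]; intros a Hs; [reflexivity|].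
  simpl; destruct (Hs 0 T eq_refl) as [v Ev].
  unfold produced_value at 1; rewrite Nat.add_0_r in Ev; rewrite Ev; simpl; f_equal.
  apply IH; intros j T' Ej.
  replace (S a + j) with (a + S j) by lia; exact (Hs (S j) T' Ej).
Qed.

Lemma cycle_safe p s i :
  well_typed p -> typed_outside_io p s -> compat (inputs p) i ->
  exists s', step (prog p) tt (pull p s i) tt s' /\
             typed_outside_io p s' /\ compat (outputs p) (push p s').
Proof.
  intros [S [HT [_ Hout]]] Hs Hi.
  destruct (step_safe _ _ _ HT (pull p s i) tt (pull_typed p s i Hs Hi))
    as [[] [s' [Hstep Hs']]].
  exists s'; split; [exact Hstep | split].
  - intros n Hin Hio.
    rewrite <- (stepT_fixed _ _ _ HT n (initT_fixed p n Hin Hio)); apply Hs'.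
  - apply produced_values_compat; intros j T Ej.
    set (n := k_in p + k_int p + j).
    destruct (Hout n) as [T' HS];
      [assert (j < k_out p) by (apply nth_error_Some; congruence);
       unfold is_output_idx, n; lia|].
    assert (T' = T) as ->.
    { pose proof (stepT_types _ _ _ HT n) as Hty.
      assert (Hn : initT p n = Some (Output true, T)) by exact (initT_output p j T Ej).
      rewrite HS, Hn in Hty; simpl in Hty; congruence. }
    specialize (Hs' n); rewrite HS in Hs'.
    destruct (typed_cell_Some _ _ _ Hs') as [v [-> [x ->]]]; eauto.
Qed.

Section Run.

Variables (p : program) (I : memory -> Prop).

Hypothesis cycle : forall s i, I s -> compat (inputs p) i ->
  exists s', step (prog p) tt (pull p s i) tt s' /\ I s' /\ compat (outputs p) (push p s').

Definition next_memory (s : memory) (i : list {tau : Type & tau}) : memory :=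
  epsilon (inhabits s) (fun s' =>
    step (prog p) tt (pull p s i) tt s' /\ I s' /\ compat (outputs p) (push p s')).

CoFixpoint run_stream (s : memory) (is : Stream (list {tau : Type & tau})) :
    Stream (list {tau : Type & tau}) :=
  match is with
  | Cons i is' => Cons (push p (next_memory s i)) (run_stream (next_memory s i) is')
  end.

Lemma run_stream_Cons s i is :
  run_stream s (Cons i is) =
  Cons (push p (next_memory s i)) (run_stream (next_memory s i) is).
Proof. now rewrite (unfold_Stream (run_stream s (Cons i is))). Qed.

Lemma next_memory_spec s i : I s -> compat (inputs p) i ->
  step (prog p) tt (pull p s i) tt (next_memory s i) /\
  I (next_memory s i) /\ compat (outputs p) (push p (next_memory s i)).
Proof. intros Hs Hi; unfold next_memory; apply epsilon_spec, cycle; assumption. Qed.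

(* The output stream is passed as [os] with an equation, so that the corecursive
   call sits directly under a constructor. *)
Lemma run_stream_rel s is os :
  I s -> ForAll (fun x => compat (inputs p) (hd x)) is -> os = run_stream s is ->
  run_rel p s is os.
Proof.
  revert s is os; cofix CH; intros s [i is] os Hs [Hi His] ->.
  destruct (next_memory_spec s i Hs Hi) as [Hstep [Hs' _]].
  rewrite run_stream_Cons; apply run_cons; [exact Hstep|].
  exact (CH _ is _ Hs' His eq_refl).
Qed.

Lemma run_stream_compat s is os :
  I s -> ForAll (fun x => compat (inputs p) (hd x)) is -> os = run_stream s is ->
  ForAll (fun x => compat (outputs p) (hd x)) os.
Proof.
  revert s is os; cofix CH; intros s [i is] os Hs [Hi His] ->.
  destruct (next_memory_spec s i Hs Hi) as [_ [Hs' Hout]].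
  rewrite run_stream_Cons; constructor; [exact Hout|].
  exact (CH _ is _ Hs' His eq_refl).
Qed.

End Run.

Theorem corollary1 (p : program) (is : Stream (list {tau : Type & tau})) :
  well_typed p ->
  ForAll (fun s => compat (inputs p) (hd s)) is ->
  exists os, run_rel p (init p) is os /\
             ForAll (fun s => compat (outputs p) (hd s)) os.
Proof.
  intros Hwt His.
  pose proof (fun s i => cycle_safe p s i Hwt) as Hcycle.
  exists (run_stream p (typed_outside_io p) (init p) is); split.
  - exact (run_stream_rel p _ Hcycle _ _ _ (init_typed_outside_io p) His eq_refl).
  - exact (run_stream_compat p _ Hcycle _ _ _ (init_typed_outside_io p) His eq_refl).
Qed.
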